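(* Let $S$ be a topological semigroup with an open right unit $e$. For every open neighborhood $U\subset S$ of $e$ there is a premetric $d:S\times S\to[0,1]$ such that: (1) $\overline d=\overline d^\circ\le d$; (2) $d$ is a left-subinvariant $\overline{\mathsf{dist}}$-continuous quasi-pseudometric with open balls on $S$; (3) $\overline d=\overline d^\circ$ is a left-subinvariant right-continuous $\overline{\mathsf{dist}}$-continuous quasi-pseudometric on $S$; (4) $B_d(x,1)\subset xU$ and $B_{\overline d}(x,1)\subset\mathrm{int}\,\overline{xU}$ for every $x\in S$; (5) if $e$ is a balanced point of $S$, then the quasi-pseudometrics $d$ and $\overline d=\overline d^\circ$ are subinvariant.
   Context: A topological semigroup is a topological space with a continuous associative multiplication. $e$ is a right unit if $xe=x$ for all $x$; an open right unit if moreover $xV$ is a neighborhood of $x$ for every neighborhood $V$ of $e$ and every $x\in S$. A point $e$ is balanced if it has a neighborhood base of open sets $V$ with $xV=Vx$ for all $x\in S$. A premetric is $d:S\times S\to[0,\infty)$ with $d(x,x)=0$; a quasi-pseudometric also satisfies $d(x,z)\le d(x,y)+d(y,z)$. $d$ is left-subinvariant if $d(zx,zy)\le d(x,y)$, right-subinvariant if $d(xz,yz)\le d(x,y)$, subinvariant if both, for all $x,y,z$. $B_d(x,\varepsilon)=\{y:d(x,y)<\varepsilon\}$, $B_d(A,\varepsilon)=\bigcup_{a\in A}B_d(a,\varepsilon)$. $d$ has open balls if all $B_d(x,\varepsilon)$ are open; right-continuous if $y\mapsto d(x,y)$ is continuous for each $x$. For non-empty $A$: $\overline d_A(x)=\inf\{\varepsilon>0:x\in\overline{B_d(A,\varepsilon)}\}$,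 $\overline d^\circ_A(x)=\inf\{\varepsilon>0:x\in B_d(A,\varepsilon)\cup\mathrm{int}\,\overline{B_d(A,\varepsilon)}\}$; $d$ is $\overline{\mathsf{dist}}$-continuous if all $\overline d_A$ are continuous. Regularization $\overline d(x,y)=\overline d_{\{x\}}(y)$, semiregularization $\overline d^\circ(x,y)=\overline d^\circ_{\{x\}}(y)$. *)

From HB Require Import structures.
From mathcomp Require Import all_boot all_order all_algebra.
From mathcomp Require Import all_classical all_reals all_analysis.
Set Implicit Arguments. Unset Strict Implicit. Unset Printing Implicit Defensive.
Import Order.TTheory GRing.Theory Num.Theory.
Import numFieldNormedType.Exports.
Local Open Scope classical_set_scope.
Local Open Scope ring_scope.

Section Defs.
Context {R : realType} {S : topologicalType}.

Definition topological_semigroup (mul : S -> S -> S) : Prop :=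
  (forall x y z, mul x (mul y z) = mul (mul x y) z) /\
  continuous (fun p : S * S => mul p.1 p.2).

Definition lmul (mul : S -> S -> S) (x : S) (A : set S) : set S := mul x @` A.
Definition rmul (mul : S -> S -> S) (A : set S) (x : S) : set S :=
  (fun a => mul a x) @` A.

Definition right_unit (mul : S -> S -> S) (e : S) : Prop :=
  forall x, mul x e = x.

Definition open_right_unit (mul : S -> S -> S) (e : S) : Prop :=
  right_unit mul e /\
  forall (V : set S) (x : S), nbhs e V -> nbhs x (lmul mul x V).

Definition balanced_point (mul : S -> S -> S) (e : S) : Prop :=
  forall W : set S, nbhs e W ->
    exists V : set S, [/\ open V, V e, V `<=` W &
                          forall x, lmul mul x V = rmul mul V x].

Definition premetric (d : S -> S -> R) : Prop :=
  (forall x y, 0 <= d x y) /\ (forall x, d x x = 0).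

Definition quasi_pseudometric (d : S -> S -> R) : Prop :=
  premetric d /\ (forall x y z, d x z <= d x y + d y z).

Definition left_subinvariant (mul : S -> S -> S) (d : S -> S -> R) : Prop :=
  forall x y z, d (mul z x) (mul z y) <= d x y.
Definition right_subinvariant (mul : S -> S -> S) (d : S -> S -> R) : Prop :=
  forall x y z, d (mul x z) (mul y z) <= d x y.
Definition subinvariant (mul : S -> S -> S) (d : S -> S -> R) : Prop :=
  left_subinvariant mul d /\ right_subinvariant mul d.

Definition dball (d : S -> S -> R) (x : S) (eps : R) : set S :=
  [set y | d x y < eps].
Definition dballA (d : S -> S -> R) (A : set S) (eps : R) : set S :=
  \bigcup_(a in A) dball d a eps.

Definition has_open_balls (d : S -> S -> R) : Prop :=
  forall x eps, open (dball d x eps).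

Definition pm_right_continuous (d : S -> S -> R) : Prop :=
  forall x, continuous (d x).

Definition dbar (d : S -> S -> R) (A : set S) (x : S) : R :=
  inf [set eps : R | 0 < eps /\ closure (dballA d A eps) x].

Definition dbarO (d : S -> S -> R) (A : set S) (x : S) : R :=
  inf [set eps : R | 0 < eps /\
        (dballA d A eps `|` interior (closure (dballA d A eps))) x].

Definition dist_continuous (d : S -> S -> R) : Prop :=
  forall A : set S, A !=set0 -> continuous (dbar d A).

Definition dreg (d : S -> S -> R) : S -> S -> R := fun x y => dbar d [set x] y.
Definition dsemireg (d : S -> S -> R) : S -> S -> R := fun x y => dbarO d [set x] y.

End Defs.

From HB Require Import structures.
From mathcomp Require Import all_boot all_order all_algebra.
From mathcomp Require Import all_classical all_reals all_analysis.
From mathcomp Require Import lra.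
Import Order.TTheory GRing.Theory Num.Theory.
Import numFieldNormedType.Exports.
Local Open Scope classical_set_scope.
Local Open Scope ring_scope.
Set Implicit Arguments. Unset Strict Implicit. Unset Printing Implicit Defensive.

(* Frink's metrization argument, run inside the semigroup.  Choose neighbourhoods
   [V n] of [e] with [V (n+1)^3 <= V n] and [V 0 <= U] (balanced if [e] is), and
   let [d x y] be the infimum, capped at 1, of [\sum_i 2^-n_i] over all chains
   [y = x a_1 ... a_k] with [a_i \in V n_i].  Concatenating chains gives the
   triangle inequality and translating them gives subinvariance; Frink's lemma
   (a chain of weight at most [2^-m] multiplies out to an element of [V m]) gives
   [B_d(x,1) <= xU].  Since [e] is an open right unit, [d]-balls are
   neighbourhoods, and since a chain can be replayed from nearby starting points,
   [d]-thickenings of closures of balls are neighbourhoods as well.  These two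
   facts alone make the regularization continuous in the distance-to-set sense,
   equal to the semiregularization, and a quasi-pseudometric inheriting the
   subinvariance of [d]. *)

Lemma closure_image (S T : topologicalType) (f : S -> T) (B : set S) y :
  {for y, continuous f} -> closure B y -> closure (f @` B) (f y).
Proof.
move=> fy By N /fy /By [b [Bb Nb]].
by exists (f b); split => //; exists b.
Qed.

Lemma closure_closure (T : topologicalType) (B : set T) :
  closure (closure B) = closure B.
Proof. by rewrite -(closure_id (closure B)).1 //; exact: closed_closure. Qed.

Section Regularization.
Context {R : realType} {S : topologicalType}.
Variable d : S -> S -> R.
Hypothesis d_ge0 : forall x y, 0 <= d x y.
Hypothesis d_refl : forall x, d x x = 0.
Hypothesis d_le1 : forall x y, d x y <= 1.
Hypothesis d_triangle : forall x y z, d x z <= d x y + d y z.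
Hypothesis nbhs_dball : forall x r, 0 < r -> nbhs x (dball d x r).
(* A weak joint upper semicontinuity of [d], enough to thicken closures of
   balls (lemma [closure_dballA_add]). *)
Hypothesis near_dball : forall y w r, d y w < r -> forall N, nbhs w N ->
  \forall z \near y, exists2 z', N z' & d z z' < r.

Local Notation cl_ball A r := (closure (dballA d A r)).

Lemma dballA_le A r s : r <= s -> dballA d A r `<=` dballA d A s.
Proof. by move=> rs y [a Aa ay]; exists a => //; exact: lt_le_trans rs. Qed.

Lemma closure_dballA_le A r s : r <= s -> cl_ball A r `<=` cl_ball A s.
Proof. by move=> rs; apply/closureS/dballA_le. Qed.

Lemma dballA_set1 x r y : dballA d [set x] r y <-> d x y < r.
Proof. by split => [[a /= -> //]|xy]; exists x. Qed.

Lemma dbar_radii_neq0 A x : A !=set0 ->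
  [set r : R | 0 < r /\ cl_ball A r x] !=set0.
Proof.
move=> [a Aa]; exists 2; split => //; apply: subset_closure; exists a => //.
by apply: le_lt_trans (d_le1 a x) _; rewrite ltr1n.
Qed.

Lemma dbar_ge0 A x : A !=set0 -> 0 <= dbar d A x.
Proof. by move=> A0; apply: lb_le_inf (dbar_radii_neq0 x A0) _ => r [/ltW]. Qed.

Lemma dbar_lt_closure A x r : A !=set0 -> dbar d A x < r -> cl_ball A r x.
Proof.
move=> A0 /(inf_lt (dbar_radii_neq0 x A0)) [s [_ Cs] sr].
exact: closure_dballA_le (ltW sr) _ Cs.
Qed.

Lemma dbar_le_closure A x r : 0 < r -> cl_ball A r x -> dbar d A x <= r.
Proof. by move=> r0 Cr; apply: ge_inf; [exists 0 => s [/ltW]|]. Qed.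

Lemma dbar_ge_not_closure A x r : A !=set0 -> ~ cl_ball A r x -> r <= dbar d A x.
Proof.
move=> A0 nCx; apply: lb_le_inf (dbar_radii_neq0 x A0) _ => s [_ Cs].
by rewrite leNgt; apply/negP => /ltW /closure_dballA_le /(_ _ Cs).
Qed.

Lemma closure_dballA_add A r s y w :
  cl_ball A r y -> d y w < s -> cl_ball A (r + s) w.
Proof.
move=> Cy yw N Nw.
have [z [[a Aa az] /= [z' Nz' zz']]] := Cy _ (near_dball yw Nw).
exists z'; split => //; exists a => //.
exact: le_lt_trans (d_triangle a z z') (ltrD az zz').
Qed.

Lemma nbhs_closure_dballA A r s x :
  cl_ball A r x -> 0 < s -> nbhs x (cl_ball A (r + s)).
Proof.
by move=> Cx s0; apply: filterS (nbhs_dball x s0) => w; apply: closure_dballA_add.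
Qed.

Lemma dbar_near_lt A x r : A !=set0 -> dbar d A x < r ->
  \forall t \near x, dbar d A t < r.
Proof.
move=> A0 xr; have x0 := dbar_ge0 x A0.
have Cx : cl_ball A ((dbar d A x + r) / 2) x by apply: dbar_lt_closure A0 _; lra.
have /(nbhs_closure_dballA Cx) : 0 < (r - dbar d A x) / 4 by lra.
apply: filterS => t Ct.
have : dbar d A t <= (dbar d A x + r) / 2 + (r - dbar d A x) / 4.
  by apply: dbar_le_closure Ct; lra.
lra.
Qed.

Lemma dbar_near_gt A x r : A !=set0 -> r < dbar d A x ->
  \forall t \near x, r < dbar d A t.
Proof.
move=> A0 rx; have [s0|s0] := leP ((r + dbar d A x) / 2) 0.
  by apply: nearW => t; have := dbar_ge0 t A0; lra.
have nCx : ~ cl_ball A ((r + dbar d A x) / 2) x.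
  by move=> /(dbar_le_closure s0); lra.
have oC : open (~` cl_ball A ((r + dbar d A x) / 2)).
  by rewrite openC; exact: closed_closure.
apply: filterS (open_nbhs_nbhs (conj oC nCx)) => t /dbar_ge_not_closure.
by move=> /(_ A0); lra.
Qed.

Lemma dbar_continuous : dist_continuous d.
Proof.
move=> A A0 x; apply/cvgrPdist_lt => eta eta0.
have lo : \forall t \near x, dbar d A x - eta < dbar d A t.
  by apply: dbar_near_gt => //; lra.
have hi : \forall t \near x, dbar d A t < dbar d A x + eta.
  by apply: dbar_near_lt => //; lra.
by apply: filterS (filterI lo hi) => t [? ?]; rewrite ltr_distlC; apply/andP.
Qed.

Lemma dbar_dbarO A x : A !=set0 -> dbar d A x = dbarO d A x.
Proof.
move=> A0; have x0 := dbar_ge0 x A0.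
have radiiO0 : [set r : R | 0 < r /\
    (dballA d A r `|` interior (closure (dballA d A r))) x] !=set0.
  have [r [r0 Cr]] := dbar_radii_neq0 x A0.
  by exists (r + 1); split; [lra|right; apply: nbhs_closure_dballA].
apply: le_anti; apply/andP; split.
  apply: lb_le_inf radiiO0 _ => r [r0 [Br|Cr]]; apply: dbar_le_closure => //.
    exact: subset_closure.
  exact: nbhs_singleton.
apply/ler_addgt0Pr => eta eta0.
have Cx : cl_ball A (dbar d A x + eta / 2) x by apply: dbar_lt_closure A0 _; lra.
rewrite {1}(splitr eta) addrA.
apply: ge_inf; first by exists 0 => r [/ltW].
by split; [lra|right; apply: nbhs_closure_dballA Cx _; lra].
Qed.

Lemma dreg_dsemireg : dreg d = dsemireg d.
Proof. by apply/funext => x; apply/funext => y; apply: dbar_dbarO; exists x. Qed.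

Lemma dreg_le x y : dreg d x y <= d x y.
Proof.
apply/ler_addgt0Pr => eps eps0; apply: dbar_le_closure; first by have := d_ge0 x y; lra.
by apply: subset_closure; apply/dballA_set1; lra.
Qed.

Lemma dreg_quasi_pseudometric : quasi_pseudometric (dreg d).
Proof.
have reg0 x y : 0 <= dreg d x y by apply: dbar_ge0; exists x.
split; first split => // x.
  apply: le_anti; rewrite reg0 andbT; apply/ler_addgt0Pr => eps eps0.
  rewrite add0r; apply: dbar_le_closure => //.
  by apply: subset_closure; apply/dballA_set1; rewrite d_refl.
move=> x y z; apply/ler_addgt0Pr => eta eta0.
have Cy : cl_ball [set x] (dreg d x y + eta / 2) y.
  by apply: dbar_lt_closure; [exists x|lra].
have Cz : cl_ball [set y] (dreg d y z + eta / 2) z.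
  by apply: dbar_lt_closure; [exists y|lra].
have -> : dreg d x y + dreg d y z + eta =
    dreg d x y + eta / 2 + (dreg d y z + eta / 2) by lra.
apply: dbar_le_closure; first by have := reg0 x y; have := reg0 y z; lra.
rewrite -closure_closure.
by apply: closureS Cz => w /dballA_set1; apply: closure_dballA_add.
Qed.

Lemma dreg_contract (f : S -> S) : continuous f ->
  (forall x y, d (f x) (f y) <= d x y) ->
  forall x y, dreg d (f x) (f y) <= dreg d x y.
Proof.
move=> fc fd x y; apply: lb_le_inf; first by apply: dbar_radii_neq0; exists x.
move=> r [r0 Cr]; apply: dbar_le_closure => //.
apply: closureS (closure_image (fc y) Cr) => _ [w /dballA_set1 xw <-].
by apply/dballA_set1; apply: le_lt_trans (fd x w) xw.
Qed.

Lemma closure_dballA_dreg A r :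
  A !=set0 -> closure (dballA (dreg d) A r) = cl_ball A r.
Proof.
move=> A0; apply/seteqP; split; last first.
  by apply: closureS => y [a Aa ay]; exists a => //; exact: le_lt_trans (dreg_le a y) ay.
rewrite -[X in _ `<=` X]closure_closure.
apply: closureS => y [a Aa /= /dbar_lt_closure] /(_ (ex_intro _ a erefl)).
by apply: closureS => w /dballA_set1 aw; exists a.
Qed.

Lemma dreg_dist_continuous : dist_continuous (dreg d).
Proof.
move=> A A0; have -> : dbar (dreg d) A = dbar d A.
  apply/funext => x; rewrite /dbar; congr inf.
  by apply/funext => r /=; rewrite closure_dballA_dreg.
exact: dbar_continuous.
Qed.

Lemma dreg_right_continuous : pm_right_continuous (dreg d).
Proof. by move=> x; apply: dbar_continuous; exists x. Qed.

Lemma dball_open : has_open_balls d.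
Proof.
move=> x r; rewrite openE => y xy.
have /(nbhs_dball y) : 0 < r - d x y by rewrite subr_gt0.
by apply: filterS => w yw; have := d_triangle x y w; rewrite /dball /= in xy yw *; lra.
Qed.

Lemma dball_dreg_subset (B : set S) x : dball d x 1 `<=` B ->
  dball (dreg d) x 1 `<=` interior (closure B).
Proof.
move=> xB y; rewrite /dball /= -/(dreg d x y) => xy.
have y0 : 0 <= dreg d x y by apply: dbar_ge0; exists x.
have Cy : cl_ball [set x] ((dreg d x y + 1) / 2) y.
  by apply: dbar_lt_closure; [exists x|lra].
have /(nbhs_closure_dballA Cy) : 0 < (1 - dreg d x y) / 4 by lra.
apply: filterS; apply: closureS => w /dballA_set1 xw; apply: xB; rewrite /dball /=; lra.
Qed.

End Regularization.

Section Weights.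
Context {R : realType}.

Definition weight (n : nat) : R := 2^-1 ^+ n.
Definition weight_sum (s : seq nat) : R := \sum_(n <- s) weight n.

Lemma weight_gt0 n : 0 < weight n.
Proof. by rewrite exprn_gt0 // invr_gt0. Qed.

Lemma weightS n : weight n = 2 * weight n.+1.
Proof. by rewrite /weight exprS mulrA mulfV ?mul1r. Qed.

Lemma weight_le m n : (weight m <= weight n) = (n <= m)%N.
Proof. by rewrite /weight ler_iXn2l // ?invr_gt0 // invf_lt1 // ltr1n. Qed.

Lemma exists_weight_lt r : 0 < r -> exists n, weight n < r.
Proof.
move=> r0; exists (Num.truncn r^-1).+1; set k := (Num.truncn r^-1).+1.
have rk : r^-1 < k%:R by apply: truncnS_gt.
have k2k : k%:R < 2 ^+ k :> R by rewrite -natrX ltr_nat ltn_expl.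
rewrite /weight exprVn -[r]invrK ltf_pV2 ?posrE ?exprn_gt0 ?invr_gt0 //.
exact: lt_trans k2k.
Qed.

Lemma weight_sum_nil : weight_sum [::] = 0.
Proof. exact: big_nil. Qed.

Lemma weight_sum_cons n s : weight_sum (n :: s) = weight n + weight_sum s.
Proof. exact: big_cons. Qed.

Lemma weight_sum_cat s t : weight_sum (s ++ t) = weight_sum s + weight_sum t.
Proof. exact: big_cat. Qed.

Lemma weight_sum_ge0 s : 0 <= weight_sum s.
Proof. by apply: sumr_ge0 => n _; exact/ltW/weight_gt0. Qed.

Lemma weight_sum_le0 s : weight_sum s <= 0 -> s = [::].
Proof.
case: s => // n s; rewrite weight_sum_cons => le0; exfalso.
by have := weight_gt0 n; have := weight_sum_ge0 s; lra.
Qed.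

Lemma weight_sum_cross c s : 0 <= c < weight_sum s ->
  exists p n q, s = p ++ n :: q /\ weight_sum p <= c < weight_sum p + weight n.
Proof.
elim: s c => [|a t IH] c; first by rewrite weight_sum_nil; lra.
rewrite weight_sum_cons => /andP [c0 ct]; have [ca|ac] := ltP c (weight a).
  by exists [::], a, t; rewrite weight_sum_nil; split => //; lra.
have [|p [n [q [-> /andP [pc cp]]]]] := IH (c - weight a); first by apply/andP; lra.
by exists (a :: p), n, q; rewrite !weight_sum_cons; split => //; apply/andP; lra.
Qed.

Lemma weight_sum_split m s : s != [::] -> weight_sum s <= weight m ->
  s = [:: m] \/ exists p n q, [/\ s = p ++ n :: q, weight_sum p <= weight m.+1,
                                 weight_sum q <= weight m.+1 & (m < n)%N].
Proof.
move=> s0 sm; have wm := weightS m; have wm1 := weight_gt0 m.+1.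
have [lt|ge] := ltP (weight m.+1) (weight_sum s).
  have [|p [n [q [sE /andP [pm mp]]]]] := weight_sum_cross (s := s) (c := weight m.+1).
    by apply/andP; lra.
  have := sm; rewrite sE weight_sum_cat weight_sum_cons => pnq.
  have p0 := weight_sum_ge0 p; have q0 := weight_sum_ge0 q.
  have [mn|nm] := ltnP m n; first by right; exists p, n, q; split => //; lra.
  have nm' : weight m <= weight n by rewrite weight_le.
  have /weight_sum_le0 pE : weight_sum p <= 0 by lra.
  have /weight_sum_le0 qE : weight_sum q <= 0 by lra.
  have -> : n = m by apply/eqP; rewrite eqn_leq nm -weight_le; lra.
  by left; rewrite pE qE.
right; case/lastP: s s0 sm ge => // p n _.
rewrite -cats1 weight_sum_cat weight_sum_cons weight_sum_nil addr0 => _ pn.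
have p0 := weight_sum_ge0 p; have n0 : 0 < weight n :> R := weight_gt0 n.
exists p, n, [::]; rewrite weight_sum_nil; split => //; try lra.
by rewrite -weight_le; lra.
Qed.

End Weights.

Section Chains.
Context {R : realType} {S : topologicalType} (mul : S -> S -> S).
Hypothesis mulA : forall x y z, mul x (mul y z) = mul (mul x y) z.
Hypothesis mul_cont : continuous (fun p : S * S => mul p.1 p.2).

Lemma mulr_continuous a : continuous (mul^~ a).
Proof.
move=> x N /= /(@mul_cont (x, a)) [[P1 P2] /= [xP1 aP2] P12].
by apply: filterS xP1 => z P1z; apply: (P12 (z, a)); split => //; exact: nbhs_singleton.
Qed.

Lemma mull_continuous a : continuous (mul a).
Proof.
move=> x N /= /(@mul_cont (a, x)) [[P1 P2] /= [aP1 xP2] P12].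
by apply: filterS xP2 => z P2z; apply: (P12 (a, z)); split => //; exact: nbhs_singleton.
Qed.

Variable V : nat -> set S.

Fixpoint chain (s : seq nat) (x y : S) : Prop :=
  if s is n :: t then exists2 a, V n a & chain t (mul x a) y else y = x.

Lemma chain_cat s t x z : chain (s ++ t) x z <-> exists2 y, chain s x y & chain t y z.
Proof.
elim: s x => [|n s IH] x /=; first by split => [|[y ->]]; [exists x|].
split; first by move=> [a Va /IH [y]]; exists y => //; exists a.
by move=> [y [a Va sy] ty]; exists a => //; apply/IH; exists y.
Qed.

Lemma chain_lmul s x y z : chain s x y -> chain s (mul z x) (mul z y).
Proof.
elim: s x => [x /= -> //|n s IH x [a Va sy]].
by exists a => //; rewrite -mulA; apply: IH.
Qed.

Lemma chain_rmul s x y z : (forall n, lmul mul z (V n) = rmul mul (V n) z) ->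
  chain s x y -> chain s (mul x z) (mul y z).
Proof.
move=> Vz; elim: s x => [x /= -> //|n s IH x [a Va sy]].
have : lmul mul z (V n) (mul a z) by rewrite Vz; exists a.
by move=> [a' Va' az]; exists a' => //; rewrite -mulA az mulA; apply: IH.
Qed.

Lemma chain_replay s y w : chain s y w ->
  exists f : S -> S, [/\ f y = w, forall z, chain s z (f z) & continuous f].
Proof.
elim: s y => [y /= ->|n s IH y [a Va /IH [f [fy sf fc]]]].
  by exists id; split => // z; exact: cvg_id.
exists (fun z => f (mul z a)); split => // [z|z]; first by exists a.
by apply: continuous_comp; [exact: mulr_continuous|exact: fc].
Qed.

Definition chain_bound (r : R) x y :=
  1 < r \/ exists2 s, weight_sum s < r & chain s x y.

Definition chain_dist x y : R := inf [set r | 0 < r /\ chain_bound r x y].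

Lemma chain_bound_le r r' x y : r <= r' -> chain_bound r x y -> chain_bound r' x y.
Proof.
by move=> rr' [r1|[s sr sxy]]; [left|right; exists s] => //; exact: lt_le_trans rr'.
Qed.

Lemma chain_dist_radii_neq0 x y : [set r : R | 0 < r /\ chain_bound r x y] !=set0.
Proof. by exists 2; split => //; left; rewrite ltr1n. Qed.

Lemma chain_dist_lt x y r : chain_dist x y < r -> chain_bound r x y.
Proof.
move=> /(inf_lt (chain_dist_radii_neq0 x y)) [r' [_ r'b] r'r].
exact: chain_bound_le (ltW r'r) r'b.
Qed.

Lemma chain_dist_le x y r : 0 < r -> chain_bound r x y -> chain_dist x y <= r.
Proof. by move=> r0 rb; apply: ge_inf; [exists 0 => r' [/ltW]|]. Qed.

Lemma chain_dist_ge0 x y : 0 <= chain_dist x y.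
Proof. by apply: lb_le_inf (chain_dist_radii_neq0 x y) _ => r [/ltW]. Qed.

Lemma chain_dist_le1 x y : chain_dist x y <= 1.
Proof. by apply/ler_addgt0Pr => eta eta0; apply: chain_dist_le; [|left]; lra. Qed.

Lemma chain_dist_refl x : chain_dist x x = 0.
Proof.
apply: le_anti; rewrite chain_dist_ge0 andbT; apply/ler_addgt0Pr => eta eta0.
by rewrite add0r; apply: chain_dist_le => //; right; exists [::]; rewrite ?weight_sum_nil.
Qed.

Lemma chain_dist_triangle x y z : chain_dist x z <= chain_dist x y + chain_dist y z.
Proof.
apply/ler_addgt0Pr => eta eta0.
have xy0 := chain_dist_ge0 x y; have yz0 := chain_dist_ge0 y z.
have /chain_dist_lt xy : chain_dist x y < chain_dist x y + eta / 2 by lra.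
have /chain_dist_lt yz : chain_dist y z < chain_dist y z + eta / 2 by lra.
apply: chain_dist_le; first lra.
case: xy => [xy|[s sxy cs]]; first by left; lra.
case: yz => [yz|[t tyz ct]]; first by left; lra.
right; exists (s ++ t); first by rewrite weight_sum_cat; lra.
by apply/chain_cat; exists y.
Qed.

Lemma chain_dist_quasi_pseudometric : quasi_pseudometric chain_dist.
Proof.
split; [split|]; first exact: chain_dist_ge0.
  exact: chain_dist_refl.
exact: chain_dist_triangle.
Qed.

Lemma chain_dist_contract (f : S -> S) :
  (forall s x y, chain s x y -> chain s (f x) (f y)) ->
  forall x y, chain_dist (f x) (f y) <= chain_dist x y.
Proof.
move=> fchain x y; apply/ler_addgt0Pr => eta eta0; have := chain_dist_ge0 x y.
move=> xy0; apply: chain_dist_le; first lra.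
have /chain_dist_lt [|[s sxy cs]] : chain_dist x y < chain_dist x y + eta by lra.
  by left.
by right; exists s => //; apply: fchain.
Qed.

Lemma chain_dist_left_subinvariant : left_subinvariant mul chain_dist.
Proof. by move=> x y z; apply: chain_dist_contract => s ? ?; exact: chain_lmul. Qed.

Lemma chain_dist_right_subinvariant :
  (forall n z, lmul mul z (V n) = rmul mul (V n) z) ->
  right_subinvariant mul chain_dist.
Proof.
move=> Vbal x y z; apply: (chain_dist_contract (f := mul^~ z)) => s ? ?.
by apply: chain_rmul.
Qed.

Lemma chain_dist_near y w r : chain_dist y w < r -> forall N, nbhs w N ->
  \forall z \near y, exists2 z', N z' & chain_dist z z' < r.
Proof.
move=> /chain_dist_lt [r1|[s sr cs]] N Nw.
  apply: nearW => z; exists w; first exact: nbhs_singleton.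
  exact: le_lt_trans (chain_dist_le1 _ _) r1.
have [f [fy sf fc]] := chain_replay cs.
have s0 : 0 <= weight_sum s :> R := weight_sum_ge0 s.
have Nf : nbhs (f y) N by rewrite fy.
have : nbhs y (f @^-1` N) := fc y N Nf.
apply: filterS => z Nfz; exists (f z) => //.
have : chain_dist z (f z) <= (weight_sum s + r) / 2.
  by apply: chain_dist_le; [lra|right; exists s; [lra|exact: sf]].
lra.
Qed.

Variable e : S.
Hypothesis mulx1 : forall x, mul x e = x.
Hypothesis nbhs_V : forall n, nbhs e (V n).
Hypothesis V_cube : forall n a b c, V n.+1 a -> V n.+1 b -> V n.+1 c ->
  V n (mul a (mul b c)).

Lemma V_unit n : V n e.
Proof. exact: nbhs_singleton. Qed.

Lemma V_decr n m : (n <= m)%N -> V m `<=` V n.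
Proof.
elim: m => [|m IH]; first by rewrite leqn0 => /eqP ->.
rewrite leq_eqVlt => /orP [/eqP -> //|/IH Vmn a Vm1a]; apply: Vmn.
by have := V_cube Vm1a (V_unit _) (V_unit _); rewrite !mulx1.
Qed.

(* Frink's lemma.  Cutting the chain at the term where its partial weights
   cross [weight m.+1] leaves two sides of weight at most [weight m.+1], which
   lie in [V m.+1] by induction; the cut term lies in [V m.+1] too, and
   [V m.+1] cubed is inside [V m]. *)
Lemma chain_weight_le s m x y : weight_sum s <= weight m :> R -> chain s x y ->
  exists2 u, V m u & y = mul x u.
Proof.
have [k] := ubnP (size s); elim: k s m x y => // k IH s m x y.
rewrite ltnS => sk; have [-> _ /= ->|s0] := eqVneq s [::].
  by exists e; [exact: V_unit|rewrite mulx1].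
move=> /(weight_sum_split s0) [-> /= [a Va ->]|[p [n [q [sE wp wq mn]]]]].
  by exists a.
rewrite sE size_cat /= addnS in sk.
have sp : (size p < k)%N by apply: leq_ltn_trans (leq_addr _ _) sk.
have sq : (size q < k)%N by apply: leq_ltn_trans (leq_addl _ _) sk.
rewrite sE => /chain_cat [y1 /(IH _ _ _ _ sp wp) [u1 Vu1 ->]].
move=> [v Vv /(IH _ _ _ _ sq wq) [u3 Vu3 ->]].
exists (mul u1 (mul v u3)); last by rewrite !mulA.
exact: V_cube Vu1 (V_decr mn Vv) Vu3.
Qed.

Lemma chain_dball_subset W x : V 0 `<=` W -> dball chain_dist x 1 `<=` lmul mul x W.
Proof.
move=> V0W y /chain_dist_lt [|[s s1 cs]]; first by rewrite ltxx.
have s0 : weight_sum s <= weight 0 :> R by rewrite /weight expr0 ltW.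
have [u /V0W Wu ->] := chain_weight_le s0 cs.
by exists u.
Qed.

Hypothesis open_unit : forall W x, nbhs e W -> nbhs x (lmul mul x W).

Lemma nbhs_chain_dball x r : 0 < r -> nbhs x (dball chain_dist x r).
Proof.
move=> r0; have [n nr] := exists_weight_lt r0.
have n0 : 0 < weight n :> R := weight_gt0 n.
apply: filterS (open_unit x (nbhs_V n)) => _ [a Va <-].
apply: le_lt_trans (_ : chain_dist x (mul x a) <= (weight n + r) / 2) _; last lra.
apply: chain_dist_le; first lra.
by right; exists [:: n]; [rewrite weight_sum_cons weight_sum_nil; lra|exists a].
Qed.

End Chains.

Section NbhsSequence.
Context {S : topologicalType} (mul : S -> S -> S) (e : S).
Hypothesis mul_cont : continuous (fun p : S * S => mul p.1 p.2).
Hypothesis mulx1 : forall x, mul x e = x.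

Lemma exists_cube_nbhs W : nbhs e W ->
  exists V : set S, [/\ nbhs e V,
    (forall a b c, V a -> V b -> V c -> W (mul a (mul b c))) &
    (balanced_point mul e -> forall x, lmul mul x V = rmul mul V x)].
Proof.
move=> eW; have ee : mul e e = e by apply: mulx1.
have /(@mul_cont (e, e)) [[P1 P2] /= [eP1 eP2] P12] : nbhs (mul e e) W by rewrite ee.
have /(@mul_cont (e, e)) [[Q1 Q2] /= [eQ1 eQ2] Q12] : nbhs (mul e e) (P1 `&` P2).
  by rewrite ee; apply: filterI.
pose V := P1 `&` Q1 `&` Q2.
have eV : nbhs e V by apply: filterI => //; exact: filterI.
have VW a b c : V a -> V b -> V c -> W (mul a (mul b c)).
  move=> [[P1a _] _] [[_ Q1b] _] [_ Q2c].
  by have [_ P2bc] := Q12 (b, c) (conj Q1b Q2c); apply: (P12 (a, _)).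
have [bal|nbal] := pselect (balanced_point mul e); last by exists V.
have [V' [oV' eV' V'V comm]] := bal V eV.
exists V'; split => //; first exact: open_nbhs_nbhs.
by move=> a b c Va Vb Vc; apply: VW; apply: V'V.
Qed.

Lemma exists_nbhs_seq U : nbhs e U ->
  exists V : nat -> set S, [/\ forall n, nbhs e (V n),
    (forall n a b c, V n.+1 a -> V n.+1 b -> V n.+1 c -> V n (mul a (mul b c))),
    V 0 `<=` U &
    (balanced_point mul e -> forall n x, lmul mul x (V n) = rmul mul (V n) x)].
Proof.
move=> eU.
have step W : {V : set S | nbhs e W -> [/\ nbhs e V,
    (forall a b c, V a -> V b -> V c -> W (mul a (mul b c))) &
    (balanced_point mul e -> forall x, lmul mul x V = rmul mul V x)]}.
  apply: cid; have [eW|neW] := pselect (nbhs e W); last by exists set0.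
  by have [V VW] := exists_cube_nbhs eW; exists V.
pose V n := iter n.+1 (fun W => sval (step W)) U.
have stepV n : nbhs e (V n) -> _ := svalP (step (V n)).
have eV n : nbhs e (V n).
  elim: n => [|n IH]; first by have [] := svalP (step U) eU.
  by have [] := stepV n IH.
exists V; split => // [n|a V0a|bal [|n] x].
- by have [] := stepV n (eV n).
- have [_ V0U _] := svalP (step U) eU.
  have e0 := nbhs_singleton (eV 0).
  by have := V0U a e e V0a e0 e0; rewrite !mulx1.
- by have [_ _ ->] := svalP (step U) eU.
- by have [_ _ ->] := stepV n (eV n).
Qed.

End NbhsSequence.

Theorem theorem6p1 (R : realType) (S : topologicalType) (mul : S -> S -> S)
  (e : S) (hS : topological_semigroup mul) (he : open_right_unit mul e)
  (U : set S) (hUo : open U) (hUe : U e) :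
  exists d : S -> S -> R,
    (premetric d /\ (forall x y : S, 0 <= d x y <= 1)) /\
    [/\ (* (1) *)
        dreg d = dsemireg d /\ (forall x y : S, dreg d x y <= d x y),
        (* (2) *)
        [/\ left_subinvariant mul d, dist_continuous d,
            quasi_pseudometric d & has_open_balls d],
        (* (3) *)
        [/\ left_subinvariant mul (dreg d), pm_right_continuous (dreg d),
            dist_continuous (dreg d) & quasi_pseudometric (dreg d)],
        (* (4) *)
        (forall x : S, (dball d x 1 `<=` lmul mul x U) /\
                   (dball (dreg d) x 1 `<=` interior (closure (lmul mul x U))))
      & (* (5) *)
        (balanced_point mul e ->
           subinvariant mul d /\ subinvariant mul (dreg d))].
Proof.
have [mulA mul_cont] := hS; have [mulx1 open_unit] := he.
have [V [nbhs_V V_cube V0U V_bal]] :=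
  exists_nbhs_seq mul_cont mulx1 (open_nbhs_nbhs (conj hUo hUe)).
pose d := chain_dist (R := R) mul V.
have d_qpm : quasi_pseudometric d := chain_dist_quasi_pseudometric mul V.
have [[d_ge0 d_refl] d_triangle] := d_qpm.
have d_le1 : forall x y, d x y <= 1 := chain_dist_le1 mul V.
have nbhs_dball : forall x r, 0 < r -> nbhs x (dball d x r).
  by move=> x r; apply: nbhs_chain_dball.
have near_dball : forall y w r, d y w < r -> forall N, nbhs w N ->
    \forall z \near y, exists2 z', N z' & d z z' < r.
  by move=> y w r; apply: chain_dist_near.
have d_left : left_subinvariant mul d := chain_dist_left_subinvariant mulA V.
have dreg_left : left_subinvariant mul (dreg d).
  by move=> x y z; apply: dreg_contract => //; exact: mull_continuous.
have d_ball x : dball d x 1 `<=` lmul mul x U by exact: chain_dball_subset.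
exists d; split; first by split => // x y; rewrite d_ge0 d_le1.
split => //.
- by split; [exact: dreg_dsemireg|move=> x y; exact: dreg_le].
- by split => //; [exact: dbar_continuous|exact: dball_open].
- by split => //; [exact: dreg_right_continuous|exact: dreg_dist_continuous
                  |exact: dreg_quasi_pseudometric].
- by move=> x; split => //; apply: dball_dreg_subset.
move=> bal.
have d_right : right_subinvariant mul d := chain_dist_right_subinvariant mulA (V_bal bal).
split; split => // x y z.
by apply: (@dreg_contract _ _ d d_le1 (mul^~ z)) => //; exact: mulr_continuous.
Qed.
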